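(* Let $Q$ be a Moufang loop with trivial nucleus. Then the assignment $\sigma(L_x)=R_x$, $\sigma(L_x^{-1})=R_x^{-1}$, $\sigma(R_x)=M_x^{-1}$, $\sigma(R_x^{-1})=M_x$ (for $x\in Q$, where $M_x=R_xL_x$) defines a well-defined mapping $\sigma:\{L_x,R_x,L_x^{-1},R_x^{-1}:x\in Q\}\to\mathrm{Mlt}(Q)$.
   Context: A loop is a magma with identity $1$ in which the left translations $L_x(y)=xy$ and right translations $R_x(y)=yx$ are bijections; it is Moufang if it satisfies $xy\cdot zx=(x\cdot yz)x$. $\mathrm{Mlt}(Q)$ is the permutation group generated by all $L_x,R_x$. The nucleus is the set of $x$ with $x(yz)=(xy)z$, $y(xz)=(yx)z$, $y(zx)=(yz)x$ for all $y,z$. Well-definedness means that whenever two of the listed permutations coincide, their prescribed images coincide. *)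

From Stdlib Require Import ClassicalEpsilon.

Set Implicit Arguments.

Section Loops.
Variable T : Type.
Variable mul : T -> T -> T.

Definition bij (f : T -> T) : Prop :=
  (forall a b, f a = f b -> a = b) /\ (forall y, exists x, f x = y).

Definition Lt (x : T) : T -> T := fun y => mul x y.
Definition Rt (x : T) : T -> T := fun y => mul y x.
(* M_x = R_x L_x, i.e. y |-> (x y) x  (composition of maps; in a Moufang
   loop this equals x (y x), so the composition convention is immaterial) *)
Definition Mt (x : T) : T -> T := fun y => Rt x (Lt x y).

(* inverse of a map, chosen by epsilon; for a bijection it is the
   two-sided inverse *)
Definition inv_fun (f : T -> T) : T -> T :=
  fun y => epsilon (inhabits y) (fun x => f x = y).

Definition is_loop (e : T) : Prop :=
  (forall x, mul e x = x) /\ (forall x, mul x e = x) /\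
  (forall x, bij (Lt x)) /\ (forall x, bij (Rt x)).

Definition moufang : Prop :=
  forall x y z, mul (mul x y) (mul z x) = mul (mul x (mul y z)) x.

Definition in_nucleus (x : T) : Prop :=
  forall y z, mul x (mul y z) = mul (mul x y) z /\
              mul y (mul x z) = mul (mul y x) z /\
              mul y (mul z x) = mul (mul y z) x.

Definition trivial_nucleus (e : T) : Prop :=
  forall x, in_nucleus x -> x = e.

(* Mlt(Q): the permutation group generated by all L_x, R_x
   (smallest set of maps containing them, closed under composition
   and inverses; it contains id = L_e). *)
Inductive Mlt : (T -> T) -> Prop :=
| Mlt_L x : Mlt (Lt x)
| Mlt_R x : Mlt (Rt x)
| Mlt_comp f g : Mlt f -> Mlt g -> Mlt (fun y => f (g y))
| Mlt_inv f : Mlt f -> Mlt (inv_fun f).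

Inductive tlabel := TL (x : T) | TR (x : T) | TLi (x : T) | TRi (x : T).

Definition perm_of (d : tlabel) : T -> T :=
  match d with
  | TL x => Lt x
  | TR x => Rt x
  | TLi x => inv_fun (Lt x)
  | TRi x => inv_fun (Rt x)
  end.

Definition sigma_img (d : tlabel) : T -> T :=
  match d with
  | TL x => Rt x
  | TLi x => inv_fun (Rt x)
  | TR x => inv_fun (Mt x)
  | TRi x => Mt x
  end.

Definition sigma_well_defined : Prop :=
  (forall d1 d2 : tlabel, (forall y, perm_of d1 y = perm_of d2 y) ->
                          (forall y, sigma_img d1 y = sigma_img d2 y)) /\
  (forall d : tlabel, Mlt (sigma_img d)).

End Loops.

(** Using the inverse property, L_x^-1 = L_(x^-1) and R_x^-1 = R_(x^-1), so every
    listed permutation is L_a or R_a for a unique a, and sigma sends L_a to R_a and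
    R_a to M_a^-1 = M_(a^-1).  Evaluating at 1 shows that the only coincidence
    between different kinds is L_a = R_a, i.e. a commutes with every element.  In a
    Moufang loop the cube of such an element is nuclear, so a^3 = 1 when the nucleus
    is trivial, and then M_(a^-1) y = a^-1 (a^-1 y) = a y = R_a y. *)

From Stdlib Require Import ClassicalEpsilon.
Set Implicit Arguments.

Section InverseMaps.
Variable T : Type.

Lemma inv_fun_rinv (f : T -> T) : bij f -> forall y, f (inv_fun f y) = y.
Proof.
  intros [_ Hsurj] y. destruct (Hsurj y) as [x Hx].
  apply (epsilon_spec (inhabits y) (fun x => f x = y)). now exists x.
Qed.

Lemma inv_fun_unique (f g : T -> T) :
  bij f -> (forall y, f (g y) = y) -> forall y, inv_fun f y = g y.
Proof.
  intros Hf Hg y. apply (proj1 Hf). now rewrite (inv_fun_rinv Hf), Hg.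
Qed.

End InverseMaps.

Section MoufangLoops.
Variable T : Type.
Variable mul : T -> T -> T.
Variable e : T.
Hypothesis Hloop : is_loop mul e.

Local Notation "x ** y" := (mul x y) (at level 40, left associativity).

Lemma mul_e_l x : e ** x = x. Proof. apply Hloop. Qed.
Lemma mul_e_r x : x ** e = x. Proof. apply Hloop. Qed.
Lemma Lt_bij x : bij (Lt mul x). Proof. apply Hloop. Qed.
Lemma Rt_bij x : bij (Rt mul x). Proof. apply Hloop. Qed.

Lemma mul_cancel_l x a b : x ** a = x ** b -> a = b.
Proof. apply (proj1 (Lt_bij x)). Qed.

Lemma mul_cancel_r x a b : a ** x = b ** x -> a = b.
Proof. apply (proj1 (Rt_bij x)). Qed.

Lemma Mt_bij x : bij (Mt mul x).
Proof.
  destruct (Lt_bij x) as [Linj Lsurj], (Rt_bij x) as [Rinj Rsurj]. split.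
  - intros a b H. apply Linj, Rinj, H.
  - intro y. destruct (Rsurj y) as [u <-], (Lsurj u) as [v <-]. now exists v.
Qed.

Definition inv x := inv_fun (Lt mul x) e.

Lemma mul_inv_r x : x ** inv x = e.
Proof. exact (inv_fun_rinv (Lt_bij x) e). Qed.

Section Moufang.
Hypothesis Hmouf : moufang mul.

Lemma flexible x z : x ** (z ** x) = (x ** z) ** x.
Proof. pose proof (Hmouf x e z) as H. now rewrite mul_e_r, mul_e_l in H. Qed.

Lemma mul_inv_cancel_l x z : x ** (inv x ** z) = z.
Proof.
  pose proof (Hmouf x (inv x) z) as H. rewrite mul_inv_r, mul_e_l in H.
  symmetry. exact (mul_cancel_r H).
Qed.

Lemma mul_inv_l x : inv x ** x = e.
Proof. apply (mul_cancel_l (x := x)). now rewrite mul_inv_cancel_l, mul_e_r. Qed.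

Lemma inv_mul_cancel_r x y : (y ** inv x) ** x = y.
Proof.
  pose proof (Hmouf x y (inv x)) as H. rewrite mul_inv_l, mul_e_r, <- flexible in H.
  symmetry. exact (mul_cancel_l H).
Qed.

Lemma inv_inv x : inv (inv x) = x.
Proof. apply (mul_cancel_l (x := inv x)). now rewrite mul_inv_r, mul_inv_l. Qed.

Lemma inv_mul_cancel_l x z : inv x ** (x ** z) = z.
Proof. rewrite <- (inv_inv x) at 2. apply mul_inv_cancel_l. Qed.

Lemma mul_inv_cancel_r x y : (y ** x) ** inv x = y.
Proof. rewrite <- (inv_inv x) at 1. apply inv_mul_cancel_r. Qed.

Lemma inv_mul a b : inv (a ** b) = inv b ** inv a.
Proof.
  assert (Hb : b ** inv (a ** b) = inv a).
  { rewrite <- (inv_mul_cancel_l a b) at 1. apply mul_inv_cancel_r. }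
  now rewrite <- Hb, inv_mul_cancel_l.
Qed.

Lemma left_moufang x w z : (x ** (w ** x)) ** z = x ** (w ** (x ** z)).
Proof.
  set (u := x ** z).
  pose proof (Hmouf x (w ** u) (inv u)) as H. rewrite mul_inv_cancel_r in H.
  assert (Hu : x ** (w ** u) = ((x ** w) ** x) ** inv (inv u ** x)).
  { now rewrite <- H, mul_inv_cancel_r. }
  rewrite Hu, inv_mul, inv_inv. unfold u. now rewrite inv_mul_cancel_l, flexible.
Qed.

Lemma right_moufang x w z : ((z ** x) ** w) ** x = z ** (x ** (w ** x)).
Proof.
  set (u := z ** x).
  pose proof (Hmouf x (inv u) (u ** w)) as H. rewrite inv_mul_cancel_l in H.
  assert (Hu : (u ** w) ** x = inv (x ** inv u) ** ((x ** w) ** x)).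
  { now rewrite <- H, inv_mul_cancel_l. }
  rewrite Hu, inv_mul, inv_inv. unfold u. now rewrite mul_inv_cancel_r, flexible.
Qed.

Lemma inv_fun_Lt x y : inv_fun (Lt mul x) y = inv x ** y.
Proof. exact (@inv_fun_unique T (Lt mul x) (Lt mul (inv x)) (Lt_bij x) (mul_inv_cancel_l x) y). Qed.

Lemma inv_fun_Rt x y : inv_fun (Rt mul x) y = y ** inv x.
Proof. exact (@inv_fun_unique T (Rt mul x) (Rt mul (inv x)) (Rt_bij x) (inv_mul_cancel_r x) y). Qed.

Lemma inv_fun_Mt x y : inv_fun (Mt mul x) y = Mt mul (inv x) y.
Proof.
  apply inv_fun_unique; [apply Mt_bij | intro z; unfold Mt, Rt, Lt].
  now rewrite <- (flexible (inv x) z), mul_inv_cancel_l, inv_mul_cancel_r.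
Qed.

Section CommutingElement.
Variable c : T.
Hypothesis Hc : forall y, c ** y = y ** c.

Lemma commuting_mul_mul y z : (c ** y) ** (c ** z) = c ** (c ** (y ** z)).
Proof.
  pose proof (Hmouf c y z) as H. rewrite <- (Hc z) in H. now rewrite H, <- Hc.
Qed.

Let cube := c ** (c ** c).

Lemma commuting_cube_mul y : cube ** y = c ** (c ** (c ** y)).
Proof.
  assert (Hcc : forall z, (c ** c) ** z = c ** (c ** z)).
  { intro z. pose proof (left_moufang c e z) as H. now rewrite !mul_e_l in H. }
  rewrite <- (mul_inv_cancel_l c y). unfold cube.
  now rewrite commuting_mul_mul, Hcc.
Qed.

Lemma commuting_mul_cube w : w ** cube = ((w ** c) ** c) ** c.
Proof. unfold cube. now rewrite right_moufang. Qed.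

Lemma commuting_cube_comm w : cube ** w = w ** cube.
Proof.
  rewrite commuting_cube_mul, commuting_mul_cube.
  now rewrite (Hc w), (Hc (w ** c)), (Hc ((w ** c) ** c)).
Qed.

Lemma commuting_cube_in_nucleus : in_nucleus mul cube.
Proof.
  assert (Hl : forall y z, cube ** (y ** z) = (cube ** y) ** z).
  { intros y z. rewrite !commuting_cube_mul, <- (commuting_mul_mul y z).
    now rewrite (Hc (c ** y)), left_moufang. }
  assert (Hr : forall y z, y ** (z ** cube) = (y ** z) ** cube).
  { intros y z. rewrite !commuting_mul_cube.
    assert (Hyz : (y ** c) ** (z ** c) = ((y ** z) ** c) ** c).
    { pose proof (Hmouf c y z) as H. rewrite (Hc y) in H.
      now rewrite H, (Hc (y ** z)). }
    rewrite <- Hyz, (right_moufang c (z ** c) y), (Hc ((z ** c) ** c)).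
    now rewrite (right_moufang c c z). }
  intros y z. split; [apply Hl | split; [| apply Hr]].
  rewrite (commuting_cube_comm z), Hr, <- (commuting_cube_comm (y ** z)), Hl.
  now rewrite (commuting_cube_comm y).
Qed.

End CommutingElement.

Definition transl (left : bool) (a : T) : T -> T :=
  if left then Lt mul a else Rt mul a.

Definition sigma_transl (left : bool) (a : T) : T -> T :=
  if left then Rt mul a else Mt mul (inv a).

Definition label_nf (d : tlabel T) : bool * T :=
  match d with
  | TL x => (true, x)
  | TLi x => (true, inv x)
  | TR x => (false, x)
  | TRi x => (false, inv x)
  end.

Lemma perm_of_nf d y :
  perm_of mul d y = transl (fst (label_nf d)) (snd (label_nf d)) y.
Proof.
  destruct d; simpl; [reflexivity | reflexivity | apply inv_fun_Lt | apply inv_fun_Rt].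
Qed.

Lemma sigma_img_nf d y :
  sigma_img mul d y = sigma_transl (fst (label_nf d)) (snd (label_nf d)) y.
Proof.
  destruct d as [x | x | x | x]; simpl;
    [reflexivity | apply inv_fun_Mt | apply inv_fun_Rt | now rewrite inv_inv].
Qed.

Section TrivialNucleus.
Hypothesis Hnuc : trivial_nucleus mul e.

Lemma commuting_cube_trivial c :
  (forall y, c ** y = y ** c) -> forall y, c ** (c ** (c ** y)) = y.
Proof.
  intros Hc y. rewrite <- (commuting_cube_mul Hc).
  rewrite (Hnuc (commuting_cube_in_nucleus Hc)). apply mul_e_l.
Qed.

Lemma Rt_commuting_eq_Mt_inv a :
  (forall y, a ** y = y ** a) -> forall y, Rt mul a y = Mt mul (inv a) y.
Proof.
  intros Ha y. set (c := inv a).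
  assert (Hc : forall y, c ** y = y ** c).
  { intro z. apply (mul_cancel_l (x := a)). unfold c.
    now rewrite mul_inv_cancel_l, Ha, inv_mul_cancel_r. }
  unfold Mt, Rt, Lt. rewrite <- (Hc (c ** y)).
  apply (mul_cancel_l (x := c)). rewrite (commuting_cube_trivial Hc), Hc.
  apply mul_inv_cancel_r.
Qed.

Lemma sigma_transl_well_defined l1 a1 l2 a2 :
  (forall y, transl l1 a1 y = transl l2 a2 y) ->
  forall y, sigma_transl l1 a1 y = sigma_transl l2 a2 y.
Proof.
  intro H.
  assert (Ha : a1 = a2).
  { specialize (H e). destruct l1, l2; simpl in H; unfold Lt, Rt in H;
      now rewrite ?mul_e_l, ?mul_e_r in H. }
  subst a2. destruct l1, l2; simpl in *; try reflexivity.
  - now apply Rt_commuting_eq_Mt_inv.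
  - intro y. symmetry. apply Rt_commuting_eq_Mt_inv. intro z. symmetry. apply H.
Qed.

End TrivialNucleus.
End Moufang.
End MoufangLoops.

Lemma Mlt_Mt (T : Type) (mul : T -> T -> T) x : Mlt mul (Mt mul x).
Proof. exact (Mlt_comp (Mlt_R mul x) (Mlt_L mul x)). Qed.

Theorem corollary6p2 (T : Type) (mul : T -> T -> T) (e : T)
  (Hloop : is_loop mul e) (Hmouf : moufang mul)
  (Hnuc : trivial_nucleus mul e) :
  sigma_well_defined mul.
Proof.
  split.
  - intros d1 d2 Hd y. rewrite !(sigma_img_nf Hloop Hmouf).
    apply (sigma_transl_well_defined Hloop Hmouf Hnuc). intro z.
    rewrite <- !(perm_of_nf Hloop Hmouf). apply Hd.
  - intros [x | x | x | x]; simpl;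
      auto using Mlt_inv, Mlt_R, Mlt_Mt.
Qed.
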